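(* Let $\rho\colon\mathrm{Isom}(\mathbf H^1_{\mathbb C})_o\to\mathrm{Isom}(\mathbf H^\infty_{\mathbb C})_o$ be a non-elementary representation with $\mathrm{Arg}(\rho)=\pi/2$. Then $\rho$ preserves a complex hyperbolic subspace of $\mathbf H^\infty_{\mathbb C}$ isometric to $\mathbf H^1_{\mathbb C}$.
   Context: $\mathcal H$: separable complex Hilbert space with strongly non-degenerate Hermitian form $B$ (linear in first variable) of signature $(1,\infty)$; $\mathbf H^\infty_{\mathbb C}=\{[v]:B(v,v)>0\}$, $\cosh d([v],[w])=|B(v,w)|/\sqrt{B(v,v)B(w,w)}$, boundary = isotropic lines, $\mathrm{Isom}(\mathbf H^\infty_{\mathbb C})_o=PU(B)$; complex hyperbolic subspaces are projectivizations of closed complex subspaces of signature $(1,m')$. $\mathbf H^1_{\mathbb C}$: $\mathbb C^2$ with $B(z,w)=z_1\bar w_1-z_2\bar w_2$, $\xi_{1,2}=(e_1\pm e_2)/\sqrt2$; $g(\lambda,b)\in SU(1,1)$ has matrix $\begin{pmatrix}\lambda&ib\\0&\lambda^{-1}\end{pmatrix}$ in basis $(\xi_1,\xi_2)$. Representations are orbitally continuous; non-elementary = no fixed point in $\mathbf H^\infty_{\mathbb C}\cup\partial\mathbf H^\infty_{\mathbb C}$ and no invariant pair of boundary points. For such $\rho$: $\eta_1$ = unique common fixed boundary point of the $\rho(g(\lambda,b))$, $\eta_2$ = other endpoint of the common axis of the hyperbolic $\rho(g(\lambda,0))$, $\lambda\neq1$; isotropic representatives with $B(\eta_1,\eta_2)=1$;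 $E=\eta_1^\perp\cap\eta_2^\perp$. The lift $T_b\in U(B)$ of $\rho(g(1,b))$ with $T_b\eta_1=\eta_1$ satisfies $T_b\eta_2=K(b)\eta_1+\eta_2+c(b)$, $K(b)\in\mathbb C$, $c(b)\in E$. $\mathrm{Arg}(\rho)$ is the argument of $K(1)$ (it lies in $[0,\pi/2]$ and is independent of choices). *)

From HB Require Import structures.
From mathcomp Require Import all_boot all_order all_algebra.
From mathcomp Require Import complex.
From mathcomp Require Import reals exp trigo.

Set Implicit Arguments.
Unset Strict Implicit.
Unset Printing Implicit Defensive.

Import Order.TTheory GRing.Theory Num.Theory.
Local Open Scope ring_scope.
Local Open Scope complex_scope.

Section Defs.
Variable R : realType.
Local Notation C := R[i].
Definition reC (z : C) : R := let: Complex a _ := z in a.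
Definition imC (z : C) : R := let: Complex _ b := z in b.

(* Matrices are written in the basis (xi_1, xi_2), xi_{1,2}=(e1+-e2)/√2 *)
(* of C^2; in this basis B(z,w)=z1 w1bar - z2 w2bar has Gram matrix J.  *)
Definition Jmat : 'M[C]_2 := \matrix_(i < 2, j < 2) (if i == j then 0 else 1).

Definition SU11 (M : 'M[C]_2) : Prop :=
  \det M = 1 /\ M^T *m Jmat *m map_mx (@conjc R) M = Jmat.

(* g(lambda,b) = [[lambda, i b],[0, lambda^-1]] in the basis (xi_1, xi_2). *)
Definition gmat (l b : R) : 'M[C]_2 :=
  \matrix_(i < 2, j < 2)
    (if (i : nat) == 0%N then (if (j : nat) == 0%N then l%:C else Complex 0 b)
     else (if (j : nat) == 0%N then 0 else (l^-1)%:C)).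

Variable V : lmodType C.
Variable B : V -> V -> C.

Definition hermitian_form : Prop :=
  (forall (a : C) (u v w : V), B (a *: u + v) w = a * B u w + B v w) /\
  (forall u v : V, B v u = conjc (B u v)).

Definition negnorm (w : V) : R := Num.sqrt (reC (- B w w)).

(* Strongly non-degenerate of signature (1, infinity) on a separable
   complex Hilbert space: H = C e0 (+) W with W = e0^perp, B(e0,e0)=1,
   -B positive definite on W, and (W, -B) a separable, complete,
   infinite-dimensional inner product space (i.e. a separable infinite
   dimensional Hilbert space). *)
Definition sig_one_infty_hilbert : Prop :=
  exists e0 : V,
    B e0 e0 = 1 /\
    (let W := fun w => B w e0 = 0 in
     (forall w, W w -> w != 0 -> B w w < 0) /\
     (forall n : nat, exists f : 'I_n -> V,
        (forall k, W (f k)) /\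
        (forall k l, B (f k) (f l) = if k == l then -1 else 0)) /\
     (forall u : nat -> V, (forall n, W (u n)) ->
        (forall e : R, 0 < e -> exists N : nat, forall m n : nat,
            (N <= m)%N -> (N <= n)%N -> negnorm (u m - u n) < e) ->
        exists w, W w /\
          (forall e : R, 0 < e -> exists N : nat, forall n : nat,
             (N <= n)%N -> negnorm (u n - w) < e)) /\
     (exists s : nat -> V, (forall n, W (s n)) /\
        forall w, W w -> forall e : R, 0 < e ->
          exists n, negnorm (w - s n) < e)).

Definition unitaryB (T : V -> V) : Prop :=
  (forall (a : C) (u v : V), T (a *: u + v) = a *: T u + T v) /\
  bijective T /\
  (forall u v : V, B (T u) (T v) = B u v).

Definition same_line (u v : V) : Prop := exists mu : C, u = mu *: v.

Definition isotropic (v : V) : Prop := v != 0 /\ B v v = 0.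

(* points of H^infty_C are lines [v] with B(v,v) > 0 *)
Definition positive (v : V) : Prop := 0 < B v v.

Definition acosh (x : R) : R := ln (x + Num.sqrt (x ^+ 2 - 1)).

Definition hdist (v w : V) : R :=
  acosh (reC `|B v w| / Num.sqrt (reC (B v v) * reC (B w w))).

(* rho is given on SU(1,1) through a choice of lifts rho g in U(B);     *)
(* it is a homomorphism into PU(B) = U(B)/U(1) and kills -1.            *)
Definition proj_rep (rho : 'M[C]_2 -> V -> V) : Prop :=
  (forall g, SU11 g -> unitaryB (rho g)) /\
  (forall g h, SU11 g -> SU11 h ->
     exists mu : C, `|mu| = 1 /\ forall v, rho (g *m h) v = mu *: rho g (rho h v)) /\
  (exists mu : C, `|mu| = 1 /\ forall v, rho (- 1%:M) v = mu *: v).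

Definition orbitally_continuous (rho : 'M[C]_2 -> V -> V) : Prop :=
  forall x : V, positive x ->
  forall g0, SU11 g0 ->
  forall e : R, 0 < e -> exists d : R, 0 < d /\
    forall g, SU11 g -> (forall i j, `|g i j - g0 i j| < d%:C) ->
      hdist (rho g x) (rho g0 x) < e.

(* non-elementary: no fixed point in H^infty_C u boundary, and no invariant
   pair of boundary points *)
Definition non_elementary (rho : 'M[C]_2 -> V -> V) : Prop :=
  ~ (exists v : V, v != 0 /\ 0 <= B v v /\
        forall g, SU11 g -> same_line (rho g v) v) /\
  ~ (exists p q : V, isotropic p /\ isotropic q /\ ~ same_line p q /\
        forall g, SU11 g ->
          (same_line (rho g p) p /\ same_line (rho g q) q) \/
          (same_line (rho g p) q /\ same_line (rho g q) p)).

Definition has_arg (K : C) (theta : R) : Prop :=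
  K != 0 /\ reC K = reC `|K| * cos theta /\ imC K = reC `|K| * sin theta.

(* Arg(rho) = theta : with eta1 the unique common fixed boundary point of the
   rho(g(l,b)), eta2 the other endpoint of the common axis of the
   rho(g(l,0)) (l <> 1), normalised by B(eta1,eta2) = 1, and T = mu rho(g(1,1))
   the lift fixing eta1, write T eta2 = K eta1 + eta2 + c with c in
   E = eta1^perp cap eta2^perp; then K has argument theta. *)
Definition Arg_is (rho : 'M[C]_2 -> V -> V) (theta : R) : Prop :=
  exists (eta1 eta2 : V) (mu K : C) (c : V),
    isotropic eta1 /\ isotropic eta2 /\ B eta1 eta2 = 1 /\
    (forall l b : R, 0 < l -> same_line (rho (gmat l b) eta1) eta1) /\
    (forall eta : V, isotropic eta ->
       (forall l b : R, 0 < l -> same_line (rho (gmat l b) eta) eta) ->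
       same_line eta eta1) /\
    (forall l : R, 0 < l -> same_line (rho (gmat l 0) eta2) eta2) /\
    `|mu| = 1 /\ mu *: rho (gmat 1 1) eta1 = eta1 /\
    mu *: rho (gmat 1 1) eta2 = K *: eta1 + eta2 + c /\
    B c eta1 = 0 /\ B c eta2 = 0 /\
    has_arg K theta.

(* a complex hyperbolic subspace isometric to H^1_C: the projectivization of
   the (closed, 2-dimensional) span of v1, v2 where B has signature (1,1)
   on span{v1,v2}, v1,v2 being a B-orthonormal basis *)
Definition in_span2 (v1 v2 w : V) : Prop :=
  exists a b : C, w = a *: v1 + b *: v2.

Definition preserves_H1_subspace (rho : 'M[C]_2 -> V -> V) : Prop :=
  exists v1 v2 : V,
    B v1 v1 = 1 /\ B v2 v2 = -1 /\ B v1 v2 = 0 /\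
    forall g, SU11 g -> forall w, in_span2 v1 v2 w -> in_span2 v1 v2 (rho g w).

End Defs.

From HB Require Import structures.
From mathcomp Require Import all_boot all_order all_algebra.
From mathcomp Require Import complex.
From mathcomp Require Import reals exp trigo.
From mathcomp Require Import ring lra.

(* Write [T = mu rho(g(1,1))] for the lift fixing [eta1], so that
   [T eta2 = K eta1 + eta2 + c].  As [T] is an isometry,
   [0 = B(T eta2, T eta2) = 2 Re K + B(c, c)], and [Arg(rho) = pi/2] means
   [Re K = 0]: thus [c] is isotropic and orthogonal to the hyperbolic plane
   [P = span(eta1, eta2)], whose orthogonal complement is negative definite,
   so [c = 0].  Hence [P] is preserved by [rho(g(1,1))] and by the dilations
   [rho(g(l,0))], which fix the lines of [eta1] and [eta2], and so by every
   [rho(g(1,b))] since [g(l,0)] conjugates [g(1,b)] to [g(1,l^2 b)].  Because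
   [g(sqrt 2,0)] conjugates [g(1,1)] to [g(1,1)^2] and [K <> 0], the dilation
   [rho(g(sqrt 2,0))] is loxodromic on [P]; the element [w] normalises the
   dilations, so it maps [eta1], [eta2] to isotropic eigenvectors of that
   loxodromic map, which lie in [P].  The Bruhat decomposition shows that the
   [g(l,b)] and [w] generate [SU(1,1)], so [rho] preserves [P], a complex
   line of signature (1,1). *)

Set Implicit Arguments.
Unset Strict Implicit.
Unset Printing Implicit Defensive.

Import Order.TTheory GRing.Theory Num.Theory.
Local Open Scope ring_scope.

Section HermitianForm.
Variable R : realType.
Local Notation C := R[i].
Variables (V : lmodType C) (B : V -> V -> C).
Hypothesis hB : hermitian_form B.

Lemma hfC u v : B v u = (B u v)^*.
Proof. exact: hB.2. Qed.

Lemma hfDl u v w : B (u + v) w = B u w + B v w.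
Proof. by have := hB.1 1 u v w; rewrite scale1r mul1r. Qed.

Lemma hf0l w : B 0 w = 0.
Proof. by apply: (addrI (B 0 w)); rewrite -hfDl !addr0. Qed.

Lemma hfZl a u w : B (a *: u) w = a * B u w.
Proof. by have := hB.1 a u 0 w; rewrite addr0 hf0l addr0. Qed.

Lemma hfDr u v w : B w (u + v) = B w u + B w v.
Proof. by rewrite [LHS]hfC hfDl rmorphD [B w u]hfC [B w v]hfC. Qed.

Lemma hfZr a u w : B w (a *: u) = a^* * B w u.
Proof. by rewrite [LHS]hfC hfZl rmorphM [B w u]hfC. Qed.

Lemma hf0r w : B w 0 = 0.
Proof. by rewrite hfC hf0l rmorph0. Qed.

Lemma hfNl u w : B (- u) w = - B u w.
Proof. by rewrite -scaleN1r hfZl mulN1r. Qed.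

Lemma hfNr u w : B w (- u) = - B w u.
Proof. by rewrite -scaleN1r hfZr rmorphN1 mulN1r. Qed.

Definition hfE := (hfDl, hfDr, hfZl, hfZr, hfNl, hfNr, hf0l, hf0r).

Section NegativeComplement.
Variable e0 : V.
Hypothesis hneg : forall w, B w e0 = 0 -> w != 0 -> B w w < 0.

(* If [e] were a nonzero isotropic vector orthogonal to [p], the combination
   [B e e0 *: p - B p e0 *: e] would be orthogonal to [e0] with nonnegative norm. *)
Lemma isotropic_perp_positive_eq0 p e :
  0 < B p p -> B e p = 0 -> B e e = 0 -> e = 0.
Proof.
move=> hp hep hee; apply/eqP/negPn/negP => enz.
have [e_e0|e_e0] := eqVneq (B e e0) 0.
  by have := hneg e_e0 enz; rewrite hee ltxx.
have hpe : B p e = 0 by rewrite hfC hep rmorph0.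
pose u := B e e0 *: p - B p e0 *: e.
have u_e0 : B u e0 = 0 by rewrite !hfE; ring.
have unz : u != 0.
  apply: contraTneq hp => u0.
  have : B u p = 0 by rewrite u0 hf0l.
  rewrite !hfE hep mulr0 subr0 => /eqP.
  by rewrite mulf_eq0 (negbTE e_e0) /= => /eqP ->; rewrite ltxx.
have huu : B u u = B e e0 * (B e e0)^* * B p p.
  by rewrite !hfE hep hpe hee; ring.
have uu_ge0 : 0 <= B u u by rewrite huu mulr_ge0 ?mulcJ_ge0 ?ltW.
by have := lt_le_trans (hneg u_e0 unz) uu_ge0; rewrite ltxx.
Qed.

End NegativeComplement.
End HermitianForm.

Section Span2.
Variables (R : realType) (V : lmodType R[i]) (u1 u2 : V).

Lemma in_span2_l : in_span2 u1 u2 u1.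
Proof. by exists 1, 0; rewrite scale1r scale0r addr0. Qed.

Lemma in_span2_r : in_span2 u1 u2 u2.
Proof. by exists 0, 1; rewrite scale1r scale0r add0r. Qed.

Lemma in_span2D v w : in_span2 u1 u2 v -> in_span2 u1 u2 w -> in_span2 u1 u2 (v + w).
Proof.
by move=> [a [b ->]] [a' [b' ->]]; exists (a + a'), (b + b'); rewrite !scalerDl addrACA.
Qed.

Lemma in_span2Z x v : in_span2 u1 u2 v -> in_span2 u1 u2 (x *: v).
Proof. by move=> [a [b ->]]; exists (x * a), (x * b); rewrite scalerDr !scalerA. Qed.

Lemma in_span2_trans v1 v2 w : in_span2 u1 u2 v1 -> in_span2 u1 u2 v2 ->
  in_span2 v1 v2 w -> in_span2 u1 u2 w.
Proof. by move=> h1 h2 [a [b ->]]; apply: in_span2D; apply: in_span2Z. Qed.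

End Span2.

Lemma in_span2_half_basis (R : realType) (V : lmodType R[i]) (u1 u2 w : V) :
  in_span2 u1 u2 w <-> in_span2 (u1 + 2^-1 *: u2) (u1 - 2^-1 *: u2) w.
Proof.
have half_sum : 2^-1 + 2^-1 = 1 :> R[i] by field.
have halves (u : V) : 2^-1 *: u + 2^-1 *: u = u by rewrite -scalerDl half_sum scale1r.
split; apply: in_span2_trans.
- by exists 2^-1, 2^-1; rewrite !scalerDr scalerN addrACA subrr addr0 halves.
- by exists 1, (-1); rewrite scale1r scaleN1r opprB addrA addrAC (addrC u1) addrK halves.
- by apply: in_span2D; [exact: in_span2_l | apply: in_span2Z; exact: in_span2_r].
- by apply: in_span2D; [exact: in_span2_l | rewrite -scaleNr; apply: in_span2Z; exact: in_span2_r].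
Qed.

Section HyperbolicPair.
Variable R : realType.
Local Notation C := R[i].
Variables (V : lmodType C) (B : V -> V -> C) (e0 e1 e2 : V).
Hypothesis hB : hermitian_form B.
Hypothesis hneg : forall w, B w e0 = 0 -> w != 0 -> B w w < 0.
Hypotheses (h11 : B e1 e1 = 0) (h22 : B e2 e2 = 0) (h12 : B e1 e2 = 1).

Lemma hf21 : B e2 e1 = 1.
Proof. by rewrite (hfC hB) h12 rmorph1. Qed.

Lemma isotropic_perp_pair_eq0 e : B e e1 = 0 -> B e e2 = 0 -> B e e = 0 -> e = 0.
Proof.
move=> he1 he2; apply: (isotropic_perp_positive_eq0 hB hneg (p := e1 + e2)).
  have -> : B (e1 + e2) (e1 + e2) = 2 by rewrite !(hfE hB) h11 h22 h12 hf21; ring.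
  by rewrite ltr0n.
by rewrite (hfDr hB) he1 he2 addr0.
Qed.

Lemma isotropic_translate_eq0 (K : C) c : K + K^* = 0 -> B c e1 = 0 -> B c e2 = 0 ->
  B (K *: e1 + e2 + c) (K *: e1 + e2 + c) = 0 -> c = 0.
Proof.
move=> reK0 hc1 hc2 hiso; apply: isotropic_perp_pair_eq0 => //.
have expand : B (K *: e1 + e2 + c) (K *: e1 + e2 + c) = K + K^* + B c c.
  rewrite !(hfE hB) h11 h22 h12 hf21 hc1 hc2.
  by rewrite [B e1 c](hfC hB) [B e2 c](hfC hB) hc1 hc2 rmorph0; ring.
by move: hiso; rewrite expand reK0 add0r.
Qed.

Lemma hyperbolic_pair_orthonormal :
  [/\ B (e1 + 2^-1 *: e2) (e1 + 2^-1 *: e2) = 1,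
      B (e1 - 2^-1 *: e2) (e1 - 2^-1 *: e2) = -1 &
      B (e1 + 2^-1 *: e2) (e1 - 2^-1 *: e2) = 0].
Proof.
have half_real : (2^-1 : C)^* = 2^-1 by rewrite rmorphV ?rmorph_nat // unitfE pnatr_eq0.
have two_neq0 : (2 : C) != 0 by rewrite pnatr_eq0.
by split; rewrite !(hfE hB) h11 h22 h12 hf21 half_real; field.
Qed.

(* The coordinates [B v e2] and [B v e1] of [v] get multiplied by [ga * be^*]
   and [ga * al^*], which are not both [1] because [al * be^* = 1 != al * al^*]. *)
Lemma isotropic_eigenvector_in_span2 (U : V -> V) (al be ga : C) v :
  (forall u w, B (U u) (U w) = B u w) -> U e1 = al *: e1 -> U e2 = be *: e2 ->
  al * al^* != 1 -> B v v = 0 -> U v = ga *: v -> in_span2 e1 e2 v.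
Proof.
move=> hU hU1 hU2 hal hvv hUv.
have hab : al * be^* = 1 by rewrite -h12 -(hU e1 e2) hU1 hU2 !(hfE hB) h12 mulr1.
set x := B v e2; set y := B v e1.
have hx : ga * be^* * x = x by rewrite /x -{2}(hU v e2) hUv hU2 !(hfE hB); ring.
have hy : ga * al^* * y = y by rewrite /y -{2}(hU v e1) hUv hU1 !(hfE hB); ring.
have x0_or_y0 : x = 0 \/ y = 0.
  have [x0|xnz] := eqVneq x 0; first by left.
  have [y0|ynz] := eqVneq y 0; first by right.
  have hbe : ga * be^* = 1 by apply: (mulIf xnz); rewrite mul1r.
  have hal' : ga * al^* = 1 by apply: (mulIf ynz); rewrite mul1r.
  have al_be : al^* = be^* by rewrite -[LHS]mul1r -hbe mulrAC hal' mul1r.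
  by move: hal; rewrite -hab al_be eqxx.
exists x, y; apply/eqP; rewrite -subr_eq0 opprD addrA; apply/eqP.
apply: isotropic_perp_pair_eq0.
- by rewrite !(hfE hB) -/y h11 hf21; ring.
- by rewrite !(hfE hB) -/x h12 h22; ring.
- rewrite !(hfE hB) -/x -/y [B e2 v](hfC hB) [B e1 v](hfC hB) -/x -/y.
  by rewrite h11 h12 hf21 h22 hvv; case: x0_or_y0 => ->; rewrite ?rmorph0; ring.
Qed.

End HyperbolicPair.

Section SU11.
Variable R : realType.
Local Notation C := R[i].
Local Open Scope complex_scope.

Definition mx2 (a b c d : C) : 'M[C]_2 :=
  \matrix_(i < 2, j < 2)
    (if (i : nat) == 0%N then (if (j : nat) == 0%N then a else b)
     else (if (j : nat) == 0%N then c else d)).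

Definition wmat : 'M[C]_2 := mx2 0 'i 'i 0.

Lemma mx2E (g : 'M[C]_2) : g = mx2 (g 0 0) (g 0 1) (g 1 0) (g 1 1).
Proof.
apply/matrixP => -[[|[|//]] hi] -[[|[|//]] hj]; rewrite !mxE /=.
all: by congr (g _ _); apply/val_inj.
Qed.

Lemma mx2_mul a b c d a' b' c' d' :
  mx2 a b c d *m mx2 a' b' c' d' =
  mx2 (a * a' + b * c') (a * b' + b * d') (c * a' + d * c') (c * b' + d * d').
Proof.
apply/matrixP => i j; rewrite !mxE !big_ord_recl big_ord0 !mxE addr0.
by case: i => [[|[|//]]] ?; case: j => [[|[|//]]] ?.
Qed.

Lemma mx2_eq a b c d a' b' c' d' :
  a = a' -> b = b' -> c = c' -> d = d' -> mx2 a b c d = mx2 a' b' c' d'.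
Proof. by move=> -> -> -> ->. Qed.

Lemma det_mx2 a b c d : \det (mx2 a b c d) = a * d - b * c.
Proof.
rewrite (expand_det_row _ ord0) !big_ord_recl big_ord0 /cofactor !det_mx11 !mxE /=.
by rewrite /bump /=; ring.
Qed.

Lemma SU11_mx2P a b c d :
  SU11 (mx2 a b c d) <->
  [/\ a * d - b * c = 1, c * a^* + a * c^* = 0, c * b^* + a * d^* = 1,
      d * a^* + b * c^* = 1 & d * b^* + b * d^* = 0].
Proof.
rewrite /SU11 det_mx2.
have -> : (mx2 a b c d)^T *m Jmat R *m map_mx (@conjc R) (mx2 a b c d) =
    mx2 (c * a^* + a * c^*) (c * b^* + a * d^*) (d * a^* + b * c^*) (d * b^* + b * d^*).
  rewrite [Jmat R]mx2E [map_mx _ _]mx2E [_^T]mx2E !mxE /= !mx2_mul.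
  by apply: mx2_eq; ring.
rewrite [Jmat R]mx2E !mxE /=; split.
  case=> -> /matrixP eqJ.
  by move: (eqJ 0 0) (eqJ 0 1) (eqJ 1 0) (eqJ 1 1); rewrite !mxE.
by case=> -> h00 h01 h10 h11; rewrite h00 h01 h10 h11.
Qed.

Lemma SU11_mul (g h : 'M[C]_2) : SU11 g -> SU11 h -> SU11 (g *m h).
Proof.
move=> [dg hg] [dh hh]; split; first by rewrite det_mulmx dg dh mulr1.
by rewrite trmx_mul map_mxM !mulmxA -(mulmxA h^T g^T) -(mulmxA h^T) hg.
Qed.

Lemma gmatE (l b : R) : gmat l b = mx2 l%:C (b *i) 0 (l^-1)%:C.
Proof. by []. Qed.

Ltac complex_eq := apply/eqP; rewrite eq_complex /=; apply/andP; split; apply/eqP.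

Ltac entrywise := apply: mx2_eq; simpc; complex_eq.

Lemma gmatM (l b l' b' : R) : gmat l b *m gmat l' b' = gmat (l * l') (l * b' + b / l').
Proof. by rewrite !gmatE mx2_mul; entrywise; rewrite ?invfM; ring. Qed.

Lemma gmat_wmat (l : R) : gmat l 0 *m wmat = wmat *m gmat l^-1 0.
Proof. by rewrite !gmatE /wmat !mx2_mul; entrywise; rewrite ?invrK; ring. Qed.

Lemma gmat1N1 : gmat 1 (-1) = wmat *m gmat 1 1 *m wmat *m gmat 1 1 *m wmat.
Proof. by rewrite !gmatE /wmat !mx2_mul; entrywise; rewrite ?invr1; ring. Qed.

Lemma mx2_bruhat (p q r s : R) : r != 0 -> p * s + q * r = 1 ->
  mx2 p%:C (q *i) (r *i) s%:C = gmat 1 (- p / r) *m wmat *m gmat r (- s).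
Proof.
move=> rnz hdet; have -> : q = (1 - p * s) / r by rewrite -hdet; field.
by rewrite !gmatE /wmat !mx2_mul; entrywise; rewrite ?invr1; field.
Qed.

Lemma mx2_upper (p q s : R) : p * s = 1 -> mx2 p%:C (q *i) 0 s%:C = gmat p q.
Proof.
move=> ps1; have pnz : p != 0.
  by move: ps1; apply: contra_eq_neq => ->; rewrite mul0r eq_sym oner_neq0.
by rewrite gmatE -[s]mul1r -(mulVf pnz) -mulrA ps1 mulr1.
Qed.

Lemma SU11_gmat (l b : R) : l != 0 -> SU11 (gmat l b).
Proof. by move=> lnz; rewrite gmatE; apply/SU11_mx2P; split; simpc; complex_eq; field. Qed.

Lemma SU11_gmat11 : SU11 (gmat 1 1 : 'M[C]_2).
Proof. exact/SU11_gmat/oner_neq0. Qed.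

Lemma SU11_wmat : SU11 wmat.
Proof. by apply/SU11_mx2P; split; simpc; complex_eq; ring. Qed.

Lemma gmat_opp (l b : R) : gmat (- l) (- b) = wmat *m wmat *m gmat l b.
Proof. by rewrite !gmatE /wmat !mx2_mul; entrywise; rewrite ?invrN; ring. Qed.

Lemma SU11_mx2_conj (a b c d : C) :
  SU11 (mx2 a b c d) -> [/\ a^* = a, b^* = - b, c^* = - c & d^* = d].
Proof.
case/SU11_mx2P => h1 h2 h3 h4 h5; split; apply/eqP; rewrite -subr_eq0; apply/eqP.
- have -> : a^* - a =
    a * (d * a^* + b * c^* - 1) - a^* * (a * d - b * c - 1) - b * (c * a^* + a * c^*).
    by ring.
  by rewrite h1 h2 h4 !subrr !mulr0 !subr0.
- have -> : b^* - - b =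
    a * (d * b^* + b * d^*) - b * (c * b^* + a * d^* - 1) - b^* * (a * d - b * c - 1).
    by ring.
  by rewrite h1 h3 h5 !subrr !mulr0 !subr0.
- have -> : c^* - - c =
    d * (c * a^* + a * c^*) - c * (d * a^* + b * c^* - 1) - c^* * (a * d - b * c - 1).
    by ring.
  by rewrite h1 h2 h4 !subrr !mulr0 !subr0.
- have -> : d^* - d =
    d * (c * b^* + a * d^* - 1) - d^* * (a * d - b * c - 1) - c * (d * b^* + b * d^*).
    by ring.
  by rewrite h1 h3 h5 !subrr !mulr0 !subr0.
Qed.

Lemma SU11_real_form (g : 'M[C]_2) : SU11 g ->
  exists p q r s : R, p * s + q * r = 1 /\ g = mx2 p%:C (q *i) (r *i) s%:C.
Proof.
rewrite [g]mx2E; move: (g 0 0) (g 0 1) (g 1 0) (g 1 1) => a b c d hg.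
have [h1 _ _ _ _] := (SU11_mx2P a b c d).1 hg.
move: hg => /SU11_mx2_conj[]; move: a b c d h1 => [a1 a2] [b1 b2] [c1 c2] [d1 d2] h1.
move=> [ha] [hb] [hc] [hd].
have [a2_0 b1_0 c1_0 d2_0] : [/\ a2 = 0, b1 = 0, c1 = 0 & d2 = 0] by split; lra.
subst a2 b1 c1 d2; exists a1, b2, c2, d1; split=> //.
by move: h1; simpc => /eqP; rewrite eq_complex /= => /andP[/eqP <- _]; ring.
Qed.

Lemma gmat_conj_shear (l c : R) : l != 0 ->
  gmat l 0 *m gmat 1 c *m gmat l^-1 0 = gmat 1 (l ^+ 2 * c).
Proof. by move=> lnz; rewrite !gmatM; congr gmat; field. Qed.

Lemma gmat_dilation_shear (l b : R) : l != 0 -> gmat l 0 *m gmat 1 (b / l) = gmat l b.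
Proof. by move=> lnz; rewrite gmatM; congr gmat; field. Qed.

Lemma gmat_sqrt2_shear (s : R) : s ^+ 2 = 2 ->
  gmat s 0 *m gmat 1 1 = gmat 1 1 *m (gmat 1 1 *m gmat s 0).
Proof.
move=> s2; have snz : s != 0.
  by move: s2; apply: contra_eq_neq => ->; rewrite expr2 mul0r eq_sym pnatr_eq0.
rewrite !gmatM !mul1r !mulr1 mul0r addr0 add0r; congr gmat.
by rewrite -[LHS](mulfK snz) -expr2 s2 mulr2n mulrDl mul1r.
Qed.

End SU11.

Section Span2Stable.
Variable R : realType.
Local Notation C := R[i].
Variables (V : lmodType C) (B : V -> V -> C) (rho : 'M[C]_2 -> V -> V).
Hypothesis hrep : proj_rep B rho.

Section Lift.
Variable g : 'M[C]_2.
Hypothesis hg : SU11 g.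

Lemma rho_isometry u v : B (rho g u) (rho g v) = B u v.
Proof. exact: (hrep.1 g hg).2.2. Qed.

Lemma rhoD u v : rho g (u + v) = rho g u + rho g v.
Proof. by have := (hrep.1 g hg).1 1 u v; rewrite !scale1r. Qed.

Lemma rho0 : rho g 0 = 0.
Proof. by apply: (addrI (rho g 0)); rewrite -rhoD !addr0. Qed.

Lemma rhoZ a u : rho g (a *: u) = a *: rho g u.
Proof. by have := (hrep.1 g hg).1 a u 0; rewrite !addr0 rho0 addr0. Qed.

End Lift.

Variables e1 e2 : V.

Definition span2_stable g := forall v, in_span2 e1 e2 v -> in_span2 e1 e2 (rho g v).

Definition span2_stab g := SU11 g /\ span2_stable g.

Lemma span2_stab_basis g : SU11 g ->
  in_span2 e1 e2 (rho g e1) -> in_span2 e1 e2 (rho g e2) -> span2_stab g.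
Proof.
move=> hg ge1 ge2; split=> // v [a [b ->]]; rewrite rhoD // !rhoZ //.
by apply: in_span2D; apply: in_span2Z.
Qed.

Lemma span2_stab_lines g : SU11 g ->
  same_line (rho g e1) e1 -> same_line (rho g e2) e2 -> span2_stab g.
Proof.
move=> hg [x gx] [y gy]; apply: span2_stab_basis; rewrite ?gx ?gy //; apply: in_span2Z.
  exact: in_span2_l.
exact: in_span2_r.
Qed.

Lemma span2_stabM g h : span2_stab g -> span2_stab h -> span2_stab (g *m h).
Proof.
move=> [hg sg] [hh sh]; split=> [|v hv]; first exact: SU11_mul.
have [nu [_ ->]] := hrep.2.1 g h hg hh.
by apply/in_span2Z/sg/sh.
Qed.

Section ParabolicStable.
Variables (e0 : V) (mu K : C).
Hypothesis hB : hermitian_form B.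
Hypothesis hneg : forall w, B w e0 = 0 -> w != 0 -> B w w < 0.
Hypotheses (h11 : B e1 e1 = 0) (h22 : B e2 e2 = 0) (h12 : B e1 e2 = 1).
Hypotheses (mu_neq0 : mu != 0) (K_neq0 : K != 0).
Hypotheses (hT1 : mu *: rho (gmat 1 1) e1 = e1) (hT2 : mu *: rho (gmat 1 1) e2 = K *: e1 + e2).
Hypothesis fix_e1 : forall l b : R, 0 < l -> same_line (rho (gmat l b) e1) e1.
Hypothesis fix_e2 : forall l : R, 0 < l -> same_line (rho (gmat l 0) e2) e2.

Lemma rho_gmat11_e1 : rho (gmat 1 1) e1 = mu^-1 *: e1.
Proof. by rewrite -{2}hT1 scalerA mulVf // scale1r. Qed.

Lemma rho_gmat11_e2 : rho (gmat 1 1) e2 = mu^-1 *: (K *: e1 + e2).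
Proof. by rewrite -hT2 scalerA mulVf // scale1r. Qed.

Lemma stab_gmat11 : span2_stab (gmat 1 1).
Proof.
apply: (span2_stab_basis (SU11_gmat11 R)); rewrite ?rho_gmat11_e1 ?rho_gmat11_e2.
  by apply: in_span2Z; apply: in_span2_l.
by apply: in_span2Z; apply: in_span2D; [apply: in_span2Z; apply: in_span2_l | apply: in_span2_r].
Qed.

Lemma stab_dilation (l : R) : 0 < l -> span2_stab (gmat l 0).
Proof.
move=> lgt0; apply: (span2_stab_lines _ (fix_e1 0 lgt0) (fix_e2 lgt0)).
exact/SU11_gmat/lt0r_neq0.
Qed.

(* [g(s,0)] conjugates [g(1,1)] to [g(1,s^2)] = [g(1,1)^2]; comparing the images
   of [e2] under both sides forces [al = 2 be], while [al * be^* = 1]. *)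
Lemma dilation_sqrt2_eigen : exists al be : C,
  [/\ rho (gmat (Num.sqrt 2) 0) e1 = al *: e1,
      rho (gmat (Num.sqrt 2) 0) e2 = be *: e2 & al * al^* = 2].
Proof.
set s := Num.sqrt 2; have sgt0 : 0 < s by rewrite sqrtr_gt0 ltr0n.
have s2 : s ^+ 2 = 2 by rewrite sqr_sqrtr ?ler0n.
have Sa : SU11 (gmat s 0 : 'M[C]_2) by exact/SU11_gmat/lt0r_neq0.
have Sn := SU11_gmat11 R.
have [al hal] := fix_e1 0 sgt0; have [be hbe] := fix_e2 sgt0.
exists al, be; split=> //.
have hab : al * be^* = 1.
  by rewrite -h12 -(rho_isometry Sa) hal hbe !(hfE hB) h12 mulr1.
have be_neq0 : be != 0.
  by move: hab; apply: contra_eq_neq => ->; rewrite rmorph0 mulr0 eq_sym oner_neq0.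
have [nu1 [nu1_1 E1]] := hrep.2.1 _ _ Sa Sn.
have [nu2 [_ E2]] := hrep.2.1 _ _ Sn (SU11_mul Sn Sa).
have [nu3 [_ E3]] := hrep.2.1 _ _ Sn Sa.
have key : nu1 *: rho (gmat s 0) (rho (gmat 1 1) e2) =
    nu2 *: rho (gmat 1 1) (nu3 *: rho (gmat 1 1) (rho (gmat s 0) e2)).
  by rewrite -E1 -E3 -E2 gmat_sqrt2_shear.
rewrite ?(rhoZ Sa, rhoD Sa, rhoZ Sn, rhoD Sn, hal, hbe,
  rho_gmat11_e1, rho_gmat11_e2) in key.
have := congr1 (B^~ e1) key; have := congr1 (B^~ e2) key.
rewrite /= !(hfE hB) h11 h12 (hf21 hB h12) h22 !(mulr0, mulr1, addr0, add0r).
move=> F2 F1.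
have lam : nu1 * mu^-1 = nu2 * nu3 * mu^-1 * mu^-1.
  by apply: (mulIf be_neq0); transitivity (nu1 * (mu^-1 * be)); [ring | rewrite F1; ring].
have nu1_neq0 : nu1 != 0 by rewrite -normr_eq0 nu1_1 oner_neq0.
have al2 : al = 2 * be.
  apply: (@mulfI _ (nu1 * mu^-1 * K)); first by rewrite !mulf_neq0 ?invr_neq0.
  transitivity (nu1 * (mu^-1 * (K * al))); first by ring.
  by rewrite F2 [in RHS]lam; ring.
by rewrite {2}al2 rmorphM rmorph_nat mulrCA hab mulr1.
Qed.

Lemma stab_wmat : span2_stab (wmat R).
Proof.
have [al [be [hal hbe al_norm]]] := dilation_sqrt2_eigen.
set s := Num.sqrt 2 in hal hbe; have sgt0 : 0 < s by rewrite sqrtr_gt0 ltr0n.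
have Sa : SU11 (gmat s 0 : 'M[C]_2) by exact/SU11_gmat/lt0r_neq0.
have Sa' : SU11 (gmat s^-1 0 : 'M[C]_2) by apply/SU11_gmat; rewrite invr_neq0 ?lt0r_neq0.
have Sw := SU11_wmat R.
have [nu4 [nu4_1 E4]] := hrep.2.1 _ _ Sa Sw.
have [nu5 [_ E5]] := hrep.2.1 _ _ Sw Sa'.
have nu4_neq0 : nu4 != 0 by rewrite -normr_eq0 nu4_1 oner_neq0.
have image_in_span2 e : B e e = 0 -> same_line (rho (gmat s^-1 0) e) e ->
    in_span2 e1 e2 (rho (wmat R) e).
  move=> hee [x hx].
  apply: (isotropic_eigenvector_in_span2 hB hneg h11 h22 h12 (U := rho (gmat s 0))
    (ga := nu4^-1 * nu5 * x) (rho_isometry Sa) hal hbe).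
  - by rewrite al_norm (eqr_nat _ 2 1).
  - by rewrite (rho_isometry Sw).
  - apply: (scalerI nu4_neq0); rewrite -E4 gmat_wmat E5 hx (rhoZ Sw).
    by rewrite !scalerA !mulrA mulfV // mul1r.
have s'gt0 : 0 < s^-1 by rewrite invr_gt0.
by apply: (span2_stab_basis Sw); apply: image_in_span2;
  [| apply: fix_e1 | | apply: fix_e2].
Qed.

Lemma stab_shear (b : R) : span2_stab (gmat 1 b).
Proof.
have stab_conj l c : 0 < l -> span2_stab (gmat 1 c) -> span2_stab (gmat 1 (l ^+ 2 * c)).
  move=> lgt0 hc; rewrite -gmat_conj_shear ?lt0r_neq0 //.
  by apply/span2_stabM/stab_dilation; [apply/span2_stabM/hc/stab_dilation | rewrite invr_gt0].
have stab_gmat1N1 : span2_stab (gmat 1 (-1)).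
  rewrite gmat1N1; do !apply/span2_stabM; by [exact: stab_wmat | exact: stab_gmat11].
have [blt0|bgt0|->] := ltgtP b 0.
- have -> : b = Num.sqrt (- b) ^+ 2 * (-1) by rewrite sqr_sqrtr ?oppr_ge0 ?ltW // mulrN1 opprK.
  by apply: stab_conj; rewrite ?sqrtr_gt0 ?oppr_gt0.
- have -> : b = Num.sqrt b ^+ 2 * 1 by rewrite sqr_sqrtr ?ltW // mulr1.
  by apply: stab_conj; [rewrite sqrtr_gt0 | exact: stab_gmat11].
- exact: stab_dilation.
Qed.

Lemma stab_gmat (l b : R) : l != 0 -> span2_stab (gmat l b).
Proof.
have stab_pos l' b' : 0 < l' -> span2_stab (gmat l' b').
  move=> lgt0; rewrite -(gmat_dilation_shear b' (lt0r_neq0 lgt0)).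
  exact/span2_stabM/stab_shear/stab_dilation.
move=> lnz; have [llt0|lgt0|l0] := ltgtP l 0; last by rewrite l0 eqxx in lnz.
- rewrite -[l]opprK -[b]opprK gmat_opp.
  by apply/span2_stabM/stab_pos; [apply/span2_stabM; exact: stab_wmat | rewrite oppr_gt0].
- exact: stab_pos.
Qed.

Lemma stab_SU11 (g : 'M[C]_2) : SU11 g -> span2_stab g.
Proof.
move=> /SU11_real_form[p [q [r [s [hdet ->]]]]].
have [r0|rnz] := eqVneq r 0.
  have ps1 : p * s = 1 by rewrite -hdet r0 mulr0 addr0.
  rewrite r0 mx2_upper //; apply: stab_gmat.
  by move: ps1; apply: contra_eq_neq => ->; rewrite mul0r eq_sym oner_neq0.
rewrite mx2_bruhat //; apply/span2_stabM/stab_gmat => //.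
exact/span2_stabM/stab_wmat/stab_shear.
Qed.

End ParabolicStable.

End Span2Stable.

Lemma has_arg_pihalf (R : realType) (K : R[i]) : has_arg K (pi / 2) -> K + K^* = 0.
Proof.
case: K => k1 k2 [_ [+ _]]; rewrite cos_pihalf mulr0 /= => ->.
by apply/eqP; rewrite eq_complex /= addr0 subrr eqxx.
Qed.

Theorem mainTheorem11 (R : realType) (V : lmodType R[i]) (B : V -> V -> R[i])
    (rho : 'M[R[i]]_2 -> V -> V) :
  hermitian_form B ->
  sig_one_infty_hilbert B ->
  proj_rep B rho ->
  orbitally_continuous B rho ->
  non_elementary B rho ->
  Arg_is B rho (pi / 2) ->
  preserves_H1_subspace B rho.
Proof.
(* Continuity and non-elementarity only serve to single out [eta1] and [eta2];
   the properties of these points that the proof needs are part of [Arg_is]. *)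
move=> hB [e0 [_ [hneg _]]] hrep _ _.
move=> [e1 [e2 [mu [K [c [[_ h11] [[_ h22] [h12 [fix_e1 [_ [fix_e2 [mu_1 [hT1 [hT2 [hc1 [hc2 argK]]]]]]]]]]]]]]]].
have mu_neq0 : mu != 0 by rewrite -normr_eq0 mu_1 oner_neq0.
have c0 : c = 0.
  apply: (isotropic_translate_eq0 hB hneg h11 h22 h12 (has_arg_pihalf argK) hc1 hc2).
  by rewrite -hT2 !(hfE hB) (rho_isometry hrep (SU11_gmat11 R)) h22 !mulr0.
rewrite c0 addr0 in hT2.
have [o11 o22 o12] := hyperbolic_pair_orthonormal hB h11 h22 h12.
exists (e1 + 2^-1 *: e2), (e1 - 2^-1 *: e2); do 3 (split; first done).
move=> g hg w /(in_span2_half_basis e1 e2 w).2 hw.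
apply/(in_span2_half_basis e1 e2 _).1.
by apply: (stab_SU11 hrep hB hneg h11 h22 h12 mu_neq0 argK.1 hT1 hT2 fix_e1 fix_e2 hg).2.
Qed.
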